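(* Let $X\in\mathbb{R}^{n\times d}$ have zero-mean columns and satisfy $\frac{1}{n}X^\top X=I_d+\rho(\boldsymbol{e}_i\boldsymbol{e}_j^\top+\boldsymbol{e}_j\boldsymbol{e}_i^\top)$ for some indices $i\neq j$ and $0<\rho<1$, where $\boldsymbol{e}_k$ is the $k$-th standard basis vector. Let $Y=X\theta^*+\epsilon$ with $\theta^*\in\mathbb{R}^d$ and $\epsilon\sim\mathcal{N}(0,\sigma I_n)$. Let $\hat\theta$ be the unregularized least squares solution, i.e. $X^\top X\hat\theta=X^\top Y$, and assume $0<\hat\theta_i<\hat\theta_j$. For $\lambda_1>0,\lambda_2>0$ define $$\theta^1=\arg\min_{\theta\in\mathbb{R}^d}\frac{1}{2n}\|X\theta-Y\|_2^2+\lambda_1\|\theta\|_1,\qquad \theta^{\mathrm{El}}=\arg\min_{\theta\in\mathbb{R}^d}\frac{1}{2n}\|X\theta-Y\|_2^2+\lambda_1\|\theta\|_1+\frac{\lambda_2}{2}\|\theta\|_2^2,$$ and let $c=\dfrac{(1+\lambda_2-\rho^2)\hat\theta_i+\lambda_2\rho\hat\theta_j}{1+\lambda_2-\rho}$. Then: (a) if $\lambda_1<(1+\rho)\hat\theta_i$ then $\theta^1_i>0$ and $\theta^1_j>0$; if $(1+\rho)\hat\theta_i\le\lambda_1<\hat\theta_j+\rho\hat\theta_i$ then $\theta^1_i=0$ and $\theta^1_j>0$; if $\lambda_1\ge\hat\theta_j+\rho\hat\theta_i$ then $\theta^1_i=\theta^1_j=0$; (b) if $\lambda_1<c$ then $\theta^{\mathrm{El}}_i>0$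 and $\theta^{\mathrm{El}}_j>0$; if $c\le\lambda_1<\hat\theta_j+\rho\hat\theta_i$ then $\theta^{\mathrm{El}}_i=0$ and $\theta^{\mathrm{El}}_j>0$; if $\lambda_1\ge\hat\theta_j+\rho\hat\theta_i$ then $\theta^{\mathrm{El}}_i=\theta^{\mathrm{El}}_j=0$. *)

From HB Require Import structures.
From mathcomp Require Import all_boot all_order all_algebra.
From mathcomp Require Import reals.
Set Implicit Arguments. Unset Strict Implicit. Unset Printing Implicit Defensive.
Import Order.TTheory GRing.Theory Num.Theory.
Local Open Scope ring_scope.

Section Objectives.
Variables (R : realType) (n d : nat).

Definition sqnorm2 (m : nat) (v : 'cV[R]_m) : R := \sum_(k < m) (v k 0) ^+ 2.

Definition norm1 (m : nat) (v : 'cV[R]_m) : R := \sum_(k < m) `|v k 0|.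

Definition lasso_obj (X : 'M[R]_(n, d)) (Y : 'cV[R]_n) (lambda1 : R)
  (theta : 'cV[R]_d) : R :=
  (2 * n%:R)^-1 * sqnorm2 (X *m theta - Y) + lambda1 * norm1 theta.

Definition enet_obj (X : 'M[R]_(n, d)) (Y : 'cV[R]_n) (lambda1 lambda2 : R)
  (theta : 'cV[R]_d) : R :=
  (2 * n%:R)^-1 * sqnorm2 (X *m theta - Y) + lambda1 * norm1 theta
  + lambda2 / 2 * sqnorm2 theta.
End Objectives.

Definition is_argmin (R : realType) (d : nat) (f : 'cV[R]_d -> R)
  (theta : 'cV[R]_d) : Prop := forall theta', f theta <= f theta'.

(* The Gram matrix of X is n (I + rho (e_i e_j^T + e_j e_i^T)) and theta_hat
   solves the normal equations, so up to a constant the (elastic net or lasso)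
   objective equals rho (t_i - theta_hat_i) (t_j - theta_hat_j) plus a sum of
   one-dimensional terms, one per coordinate.  Hence the coordinates i and j of
   any minimiser minimise a function of two variables which, as rho < 1, grows
   at least like (1 - rho)/2 times the squared distance from any point meeting
   the subgradient optimality conditions.  In each regime such a point is
   written down explicitly, and it is therefore the only minimiser. *)

From HB Require Import structures.
From mathcomp Require Import all_boot all_order all_algebra.
From mathcomp Require Import reals.
From mathcomp Require Import ring lra.
Set Implicit Arguments. Unset Strict Implicit. Unset Printing Implicit Defensive.
Import Order.TTheory GRing.Theory Num.Theory.
Local Open Scope ring_scope.

Definition coord_obj (R : realFieldType) (lam mu t x : R) : R :=
  2^-1 * (x - t) ^+ 2 + lam * `|x| + mu / 2 * x ^+ 2.

Definition pair_obj (R : realFieldType) (rho lam mu ti tj a b : R) : R :=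
  rho * (a - ti) * (b - tj) + coord_obj lam mu ti a + coord_obj lam mu tj b.

Definition enet_threshold (R : realFieldType) (rho mu ti tj : R) : R :=
  ((1 + mu - rho ^+ 2) * ti + mu * rho * tj) / (1 + mu - rho).

Lemma enet_threshold0 (R : realFieldType) (rho ti tj : R) :
  rho != 1 -> enet_threshold rho 0 ti tj = (1 + rho) * ti.
Proof.
move=> rho_neq1; rewrite /enet_threshold addr0.
by field; rewrite subr_eq0 eq_sym.
Qed.

Lemma subgrad_abs_le (R : realDomainType) (lam p x : R) :
  `|p| <= lam -> p * x <= lam * `|x|.
Proof.
by move=> p_le; rewrite (le_trans (ler_norm _)) // normrM ler_wpM2r.
Qed.

Section PairObjective.
Variables (R : realFieldType) (rho lam mu ti tj : R).

Local Notation g := (pair_obj rho lam mu ti tj).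

(* [pa] and [pb] stand for [lam] times subgradients of [|.|] at [a0] and [b0]. *)
Lemma pair_obj_growth (a0 b0 pa pb a b : R) :
  0 <= rho -> 0 <= mu -> `|pa| <= lam -> `|pb| <= lam ->
  pa * a0 = lam * `|a0| -> pb * b0 = lam * `|b0| ->
  (1 + mu) * a0 - ti + rho * (b0 - tj) + pa = 0 ->
  (1 + mu) * b0 - tj + rho * (a0 - ti) + pb = 0 ->
  (1 - rho) / 2 * ((a - a0) ^+ 2 + (b - b0) ^+ 2) <= g a b - g a0 b0.
Proof.
move=> rho_ge0 mu_ge0 pa_le pb_le pa_a0 pb_b0 stat_a stat_b.
set x := a - a0; set y := b - b0.
have expand : g a b - g a0 b0 =
    (lam * `|a| - pa * a) + (lam * `|b| - pb * b)
    + ((1 + mu) * a0 - ti + rho * (b0 - tj) + pa) * x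
    + ((1 + mu) * b0 - tj + rho * (a0 - ti) + pb) * y
    + 2^-1 * ((1 + mu) * (x ^+ 2 + y ^+ 2) + 2 * rho * x * y).
  by rewrite /pair_obj /coord_obj -pa_a0 -pb_b0 /x /y; field.
rewrite expand stat_a stat_b !mul0r !addr0.
have := subgrad_abs_le a pa_le; have := subgrad_abs_le b pb_le.
have : 0 <= rho * (x + y) ^+ 2 by rewrite mulr_ge0 ?sqr_ge0.
have : 0 <= mu * (x ^+ 2 + y ^+ 2) by rewrite mulr_ge0 ?addr_ge0 ?sqr_ge0.
nra.
Qed.

Lemma pair_argmin_unique (a0 b0 pa pb a b : R) :
  0 <= rho -> rho < 1 -> 0 <= mu -> `|pa| <= lam -> `|pb| <= lam ->
  pa * a0 = lam * `|a0| -> pb * b0 = lam * `|b0| ->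
  (1 + mu) * a0 - ti + rho * (b0 - tj) + pa = 0 ->
  (1 + mu) * b0 - tj + rho * (a0 - ti) + pb = 0 ->
  g a b <= g a0 b0 -> a = a0 /\ b = b0.
Proof.
move=> rho_ge0 rho_lt1 mu_ge0 pa_le pb_le pa_a0 pb_b0 stat_a stat_b min_ab.
have growth := pair_obj_growth a b rho_ge0 mu_ge0 pa_le pb_le pa_a0 pb_b0 stat_a stat_b.
have [sqa sqb] : 0 <= (a - a0) ^+ 2 /\ 0 <= (b - b0) ^+ 2 by rewrite !sqr_ge0.
have /eqP : (a - a0) ^+ 2 + (b - b0) ^+ 2 = 0 by nra.
by rewrite paddr_eq0 ?sqr_ge0 // !sqrf_eq0 !subr_eq0 => /andP[/eqP -> /eqP ->].
Qed.

(* Below the threshold both subgradients are [1], and stationarity becomes a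
   2x2 linear system with determinant [D]. *)
Lemma pair_argmin_pos (a b : R) :
  0 < rho -> rho < 1 -> 0 <= mu -> 0 < lam -> 0 < ti -> ti < tj ->
  (forall a' b', g a b <= g a' b') ->
  lam < enet_threshold rho mu ti tj -> 0 < a /\ 0 < b.
Proof.
move=> rho_gt0 rho_lt1 mu_ge0 lam_gt0 ti_gt0 ti_lt_tj ab_min.
have den_gt0 : 0 < 1 + mu - rho by lra.
rewrite ltr_pdivlMr // => lam_lt.
pose D := (1 + mu) ^+ 2 - rho ^+ 2.
have D_gt0 : 0 < D by rewrite /D; nra.
pose u := ti + rho * tj - lam; pose v := tj + rho * ti - lam.
have num_a : 0 < (1 + mu) * u - rho * v by rewrite /u /v; lra.
have num_b : 0 < (1 + mu) * v - rho * u.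
  have -> : (1 + mu) * v - rho * u
      = (1 + mu) * u - rho * v + (tj - ti) * ((1 - rho) * (1 + rho + mu)).
    by rewrite /u /v; ring.
  by rewrite addr_gt0 // !mulr_gt0 //; lra.
pose a0 := ((1 + mu) * u - rho * v) / D; pose b0 := ((1 + mu) * v - rho * u) / D.
have [a0_gt0 b0_gt0] : 0 < a0 /\ 0 < b0 by rewrite !divr_gt0.
have [-> ->] : a = a0 /\ b = b0.
  apply: (pair_argmin_unique (pa := lam) (pb := lam) _ _ _ _ _ _ _ _ _ (ab_min a0 b0));
    rewrite ?gtr0_norm ?(mulrC lam) //; try lra.
  - by rewrite /a0 /b0 /u /v /D; field; rewrite gt_eqF.
  - by rewrite /a0 /b0 /u /v /D; field; rewrite gt_eqF.
by split.
Qed.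

(* With [a0 = 0], stationarity in [a] forces the subgradient [pa]; the
   condition [pa <= lam] is exactly the threshold inequality. *)
Lemma pair_argmin_sparse (a b : R) :
  0 < rho -> rho < 1 -> 0 <= mu -> 0 < lam -> 0 < ti -> ti < tj ->
  (forall a' b', g a b <= g a' b') ->
  enet_threshold rho mu ti tj <= lam -> lam < tj + rho * ti -> a = 0 /\ 0 < b.
Proof.
move=> rho_gt0 rho_lt1 mu_ge0 lam_gt0 ti_gt0 ti_lt_tj ab_min.
have den_gt0 : 0 < 1 + mu - rho by lra.
have mu1_gt0 : 0 < 1 + mu by lra.
rewrite ler_pdivrMr // => lam_ge lam_lt.
pose b0 := (tj + rho * ti - lam) / (1 + mu).
have b0_gt0 : 0 < b0 by rewrite divr_gt0 // subr_gt0.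
pose pa := ti - rho * (b0 - tj).
have pa_scaled : (1 + mu) * pa = (1 + mu - rho ^+ 2) * ti + rho * lam + rho * mu * tj.
  by rewrite /pa /b0; field; rewrite gt_eqF.
have pa_ge0 : 0 <= pa.
  rewrite -(pmulr_rge0 _ mu1_gt0) pa_scaled.
  have : 0 < 1 - rho ^+ 2 by nra.
  have : 0 <= rho * mu * tj by rewrite !mulr_ge0 //; lra.
  nra.
have pa_le : pa <= lam by rewrite -(ler_pM2l mu1_gt0) pa_scaled; nra.
have [-> ->] : a = 0 /\ b = b0.
  apply: (pair_argmin_unique (pa := pa) (pb := lam) _ _ _ _ _ _ _ _ _ (ab_min 0 b0));
    rewrite ?ger0_norm ?gtr0_norm ?normr0 ?mulr0 ?(mulrC lam) //; try lra.
  - by rewrite /pa; ring.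
  - by rewrite /b0; field; rewrite gt_eqF.
by split.
Qed.

Lemma pair_argmin_zero (a b : R) :
  0 < rho -> rho < 1 -> 0 <= mu -> 0 < lam -> 0 < ti -> ti < tj ->
  (forall a' b', g a b <= g a' b') ->
  tj + rho * ti <= lam -> a = 0 /\ b = 0.
Proof.
move=> rho_gt0 rho_lt1 mu_ge0 lam_gt0 ti_gt0 ti_lt_tj ab_min lam_ge.
have ti_lt : ti + rho * tj < tj + rho * ti by nra.
apply: (pair_argmin_unique (pa := ti + rho * tj) (pb := tj + rho * ti)
  _ _ _ _ _ _ _ _ _ (ab_min 0 0)); rewrite ?ger0_norm ?normr0 ?mulr0 //; nra.
Qed.

Lemma pair_argmin_regimes (a b : R) :
  0 < rho -> rho < 1 -> 0 <= mu -> 0 < lam -> 0 < ti -> ti < tj ->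
  (forall a' b', g a b <= g a' b') ->
  let thr := enet_threshold rho mu ti tj in
  (lam < thr -> 0 < a /\ 0 < b) /\
  (thr <= lam -> lam < tj + rho * ti -> a = 0 /\ 0 < b) /\
  (tj + rho * ti <= lam -> a = 0 /\ b = 0).
Proof.
move=> *; split; first exact: pair_argmin_pos.
by split; [exact: pair_argmin_sparse | exact: pair_argmin_zero].
Qed.

End PairObjective.

Definition corr_mx (R : pzRingType) (d : nat) (rho : R) (i j : 'I_d) : 'M[R]_d :=
  1%:M + rho *: (delta_mx i j + delta_mx j i).

Lemma quad_delta_mx (R : pzRingType) (m : nat) (u v : 'cV[R]_m) (i j : 'I_m) :
  (u^T *m delta_mx i j *m v) 0 0 = u i 0 * v j 0.
Proof.
rewrite -(mul_delta_mx (0 : 'I_1)) mulmxA -colE -mulmxA -rowE.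
by rewrite mxE big_ord1 !mxE.
Qed.

Lemma sqnorm2_mx (R : realType) (m : nat) (v : 'cV[R]_m) :
  sqnorm2 v = (v^T *m v) 0 0.
Proof. by rewrite /sqnorm2 mxE; apply: eq_bigr => k _; rewrite !mxE expr2. Qed.

Lemma quad_corr_mx (R : realType) (d : nat) (rho : R) (i j : 'I_d) (w : 'cV[R]_d) :
  (w^T *m corr_mx rho i j *m w) 0 0 = sqnorm2 w + 2 * rho * (w i 0 * w j 0).
Proof.
rewrite mulmxDr mulmx1 mulmxDl -scalemxAr -scalemxAl mulmxDr mulmxDl.
rewrite mxE [X in _ + X]mxE [X in _ + _ * X]mxE !quad_delta_mx sqnorm2_mx.
by rewrite [w j 0 * _]mulrC; ring.
Qed.

Lemma sqnorm2_pythagoras (R : realType) (n d : nat) (X : 'M[R]_(n, d))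
    (w : 'cV[R]_d) (r : 'cV[R]_n) :
  X^T *m r = 0 ->
  sqnorm2 (X *m w + r) = (w^T *m (X^T *m X) *m w) 0 0 + sqnorm2 r.
Proof.
move=> orth; rewrite !sqnorm2_mx [(_ + r)^T]linearD /= trmx_mul mulmxDl !mulmxDr.
have -> : w^T *m X^T *m r = 0 by rewrite -mulmxA orth mulmx0.
have -> : r^T *m (X *m w) = 0.
  by rewrite mulmxA -(trmxK X) -trmx_mul orth trmx0 mul0mx.
by rewrite !mulmxA addr0 add0r mxE.
Qed.

Lemma scaled_corr_mx_natr_neq0 (R : fieldType) (n d : nat) (A : 'M[R]_d)
    (rho : R) (i j : 'I_d) :
  i != j -> (n%:R)^-1 *: A = corr_mx rho i j -> n%:R != 0 :> R.
Proof.
move=> ij; apply: contra_eqN => /eqP ->; rewrite invr0 scale0r.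
apply/eqP => /(congr1 (fun M : 'M[R]_d => M i i)).
rewrite !mxE eqxx (negbTE ij) /= !addr0 mulr0 addr0 => /eqP.
by rewrite eq_sym oner_eq0.
Qed.

Section EnetObjective.
Variables (R : realType) (n d : nat) (X : 'M[R]_(n, d)) (Y : 'cV[R]_n).
Variables (theta_hat : 'cV[R]_d) (rho : R) (i j : 'I_d).
Hypotheses (n_neq0 : n%:R != 0 :> R) (gram : X^T *m X = n%:R *: corr_mx rho i j).
Hypothesis normal_eq : X^T *m X *m theta_hat = X^T *m Y.

Lemma lasso_enet_obj (lam : R) (t : 'cV[R]_d) :
  lasso_obj X Y lam t = enet_obj X Y lam 0 t.
Proof. by rewrite /enet_obj mul0r mul0r addr0. Qed.

Lemma enet_objE (lam mu : R) (t : 'cV[R]_d) :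
  enet_obj X Y lam mu t =
  (2 * n%:R)^-1 * sqnorm2 (X *m theta_hat - Y)
  + rho * (t i 0 - theta_hat i 0) * (t j 0 - theta_hat j 0)
  + \sum_k coord_obj lam mu (theta_hat k 0) (t k 0).
Proof.
rewrite /enet_obj /lasso_obj.
have -> : X *m t - Y = X *m (t - theta_hat) + (X *m theta_hat - Y).
  by rewrite mulmxBr addrA subrK.
rewrite sqnorm2_pythagoras; last first.
  by rewrite mulmxBr mulmxA normal_eq subrr.
rewrite gram -scalemxAr -scalemxAl mxE quad_corr_mx.
have -> : \sum_k coord_obj lam mu (theta_hat k 0) (t k 0)
    = 2^-1 * sqnorm2 (t - theta_hat) + lam * norm1 t + mu / 2 * sqnorm2 t.
  rewrite /sqnorm2 /norm1 !mulr_sumr -!big_split.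
  by apply: eq_bigr => k _; rewrite /coord_obj !mxE.
by rewrite !mxE; field.
Qed.

Lemma enet_argmin_pair (lam mu : R) (t : 'cV[R]_d) :
  i != j -> is_argmin (enet_obj X Y lam mu) t ->
  forall a b, pair_obj rho lam mu (theta_hat i 0) (theta_hat j 0) (t i 0) (t j 0)
              <= pair_obj rho lam mu (theta_hat i 0) (theta_hat j 0) a b.
Proof.
move=> ij t_min a b.
pose t' : 'cV[R]_d := \col_k (if k == i then a else if k == j then b else t k 0).
have split_ij (s : 'cV[R]_d) : \sum_k coord_obj lam mu (theta_hat k 0) (s k 0)
    = coord_obj lam mu (theta_hat i 0) (s i 0) + coord_obj lam mu (theta_hat j 0) (s j 0)
      + \sum_(k | (k != i) && (k != j)) coord_obj lam mu (theta_hat k 0) (s k 0).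
  by rewrite (bigD1 i) //= (bigD1 j) 1?eq_sym //= addrA.
have same_rest : \sum_(k | (k != i) && (k != j)) coord_obj lam mu (theta_hat k 0) (t' k 0)
    = \sum_(k | (k != i) && (k != j)) coord_obj lam mu (theta_hat k 0) (t k 0).
  by apply: eq_bigr => k /andP[/negbTE ki /negbTE kj]; rewrite mxE ki kj.
have t'_i : t' i 0 = a by rewrite mxE eqxx.
have t'_j : t' j 0 = b by rewrite mxE eq_sym (negbTE ij) eqxx.
have := t_min t'; rewrite !enet_objE !split_ij same_rest t'_i t'_j /pair_obj.
lra.
Qed.

End EnetObjective.

Theorem proposition5p1 (R : realType) (n d : nat) (X : 'M[R]_(n, d))
  (i j : 'I_d) (rho : R) (theta_star : 'cV[R]_d) (eps : 'cV[R]_n)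
  (Y : 'cV[R]_n) (theta_hat : 'cV[R]_d) (lambda1 lambda2 : R)
  (theta1 thetaEl : 'cV[R]_d) :
  (forall k : 'I_d, \sum_(r < n) X r k = 0) ->
  i != j -> 0 < rho -> rho < 1 ->
  (n%:R)^-1 *: (X^T *m X) = 1%:M + rho *: (delta_mx i j + delta_mx j i) ->
  Y = X *m theta_star + eps ->
  X^T *m X *m theta_hat = X^T *m Y ->
  0 < theta_hat i 0 -> theta_hat i 0 < theta_hat j 0 ->
  0 < lambda1 -> 0 < lambda2 ->
  is_argmin (lasso_obj X Y lambda1) theta1 ->
  is_argmin (enet_obj X Y lambda1 lambda2) thetaEl ->
  let ti := theta_hat i 0 in
  let tj := theta_hat j 0 in
  let c := ((1 + lambda2 - rho ^+ 2) * ti + lambda2 * rho * tj)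
           / (1 + lambda2 - rho) in
  ((lambda1 < (1 + rho) * ti -> 0 < theta1 i 0 /\ 0 < theta1 j 0) /\
   ((1 + rho) * ti <= lambda1 -> lambda1 < tj + rho * ti ->
      theta1 i 0 = 0 /\ 0 < theta1 j 0) /\
   (tj + rho * ti <= lambda1 -> theta1 i 0 = 0 /\ theta1 j 0 = 0)) /\
  ((lambda1 < c -> 0 < thetaEl i 0 /\ 0 < thetaEl j 0) /\
   (c <= lambda1 -> lambda1 < tj + rho * ti ->
      thetaEl i 0 = 0 /\ 0 < thetaEl j 0) /\
   (tj + rho * ti <= lambda1 -> thetaEl i 0 = 0 /\ thetaEl j 0 = 0)).
Proof.
move=> _ ij rho_gt0 rho_lt1 gram_scaled _ normal_eq ti_gt0 ti_lt_tj lam1_gt0 lam2_gt0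
  theta1_min thetaEl_min ti tj c.
have n_neq0 := scaled_corr_mx_natr_neq0 ij gram_scaled.
have gram : X^T *m X = n%:R *: corr_mx rho i j.
  by rewrite /corr_mx -gram_scaled scalerA mulfV // scale1r.
have theta1_enet : is_argmin (enet_obj X Y lambda1 0) theta1.
  by move=> t; rewrite -!lasso_enet_obj.
split.
- rewrite -(enet_threshold0 ti tj (negbT (lt_eqF rho_lt1))).
  apply: pair_argmin_regimes => //.
  exact: enet_argmin_pair n_neq0 gram normal_eq _ _ _ ij theta1_enet.
- apply: pair_argmin_regimes => //; first exact: ltW.
  exact: enet_argmin_pair n_neq0 gram normal_eq _ _ _ ij thetaEl_min.
Qed.
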